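(* Let $\mathcal{C}_1$ be an arbitrary $(n_1,k_1)$ systematic binary linear code with generator matrix $\boldsymbol{G}$ (a $k_1\times n_1$ matrix over $\mathbb{F}_2$), and let $\mathcal{S}_\nu$ be the length-$\nu$ systematic single parity-check code. Let $\mathcal{C}$ be the product code consisting of all $\nu\times n_1$ binary arrays whose rows are codewords of $\mathcal{C}_1$ and whose columns are codewords of $\mathcal{S}_\nu$ (i.e., have even Hamming weight). Then the weight enumerator function of $\mathcal{C}$ is $$A_{\mathcal{C}}(z) = 2^{-k_1}\sum_{\boldsymbol{v}\in\{0,1\}^{k_1}}\left(\sum_{\boldsymbol{u}\in\{0,1\}^{k_1}}(-1)^{\boldsymbol{u}\cdot\boldsymbol{v}^{\mathrm{T}}} z^{w_{\mathrm{H}}(\boldsymbol{u}\boldsymbol{G})}\right)^{\nu}.$$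
   Context: $w_{\mathrm{H}}(\cdot)$ denotes Hamming weight; $\boldsymbol{u}\boldsymbol{G}$ is computed over $\mathbb{F}_2$; $\boldsymbol{u}\cdot\boldsymbol{v}^{\mathrm{T}}=\sum_i u_iv_i$ (only its parity matters). The weight enumerator function of a binary code $\mathcal{C}$ of length $N$ is $A_{\mathcal{C}}(z) = \sum_{i=0}^{N} A_i z^i$, where $A_i$ is the number of codewords of Hamming weight $i$. *)

From HB Require Import structures.
From mathcomp Require Import all_boot all_order all_algebra.
Set Implicit Arguments. Unset Strict Implicit. Unset Printing Implicit Defensive.
Import GRing.Theory Num.Theory.
Local Open Scope ring_scope.

Definition wH (m n : nat) (A : 'M['F_2]_(m, n)) : nat :=
  #|[set p : 'I_m * 'I_n | A p.1 p.2 != 0]|.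

Definition systematic (k n : nat) (G : 'M['F_2]_(k, n)) : Prop :=
  exists h : (k <= n)%N, forall i j : 'I_k, G i (widen_ord h j) = (i == j)%:R.

Definition lin_code (k n : nat) (G : 'M['F_2]_(k, n)) (c : 'rV['F_2]_n) : bool :=
  [exists u : 'rV['F_2]_k, c == u *m G].

Definition spc_code (nu : nat) (c : 'cV['F_2]_nu) : bool := ~~ odd (wH c).

Definition product_code (k n nu : nat) (G : 'M['F_2]_(k, n)) (c : 'M['F_2]_(nu, n)) : bool :=
  [forall i, lin_code G (row i c)] && [forall j, spc_code (col j c)].

Definition weight_enum (m n : nat) (C : pred 'M['F_2]_(m, n)) : {poly rat} :=
  \sum_(i < (m * n).+1)
     (#|[set c : 'M['F_2]_(m, n) | C c && (wH c == i)]|)%:R *: 'X^i.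

(* u . v^T = sum_i u_i v_i (as a natural number; only parity matters) *)
Definition dotn (k : nat) (u v : 'rV['F_2]_k) : nat :=
  (\sum_(i < k) (val (u ord0 i) * val (v ord0 i)))%N.

(* Since G is systematic, u |-> uG is injective, so a codeword of the product
   code is the same thing as a nu-tuple of messages (u_1, ..., u_nu) whose rows
   u_i G have even column sums, i.e. with sum_i u_i = 0; its weight is
   sum_i w_H(u_i G).  The constraint sum_i u_i = 0 is detected by the character
   sum 2^-k sum_v (-1)^((sum_i u_i).v), which is 1 or 0 accordingly; the sign
   factors over i, and summing over all tuples turns the product into the
   nu-th power of sum_u (-1)^(u.v) z^(w_H(uG)). *)

From HB Require Import structures.
From mathcomp Require Import all_boot all_order all_algebra.
Import GRing.Theory Num.Theory.
Local Open Scope ring_scope.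
Set Implicit Arguments. Unset Strict Implicit. Unset Printing Implicit Defensive.

Lemma F2_natr_odd (n : nat) : n%:R = (odd n)%:R :> 'F_2.
Proof. by rewrite -(Fp_nat_mod (isT : prime 2)) modn2. Qed.

Lemma F2_natr_eq0 (n : nat) : (n%:R == 0 :> 'F_2) = ~~ odd n.
Proof. by rewrite F2_natr_odd; case: (odd n). Qed.

Lemma F2_neq0E (x : 'F_2) : x = (x != 0)%:R.
Proof. by case: x => [[|[|m]] lt_m2] //; apply/val_inj. Qed.

Lemma signr_F2_natr (R : pzRingType) (m n : nat) :
  m%:R = n%:R :> 'F_2 -> (-1) ^+ m = (-1) ^+ n :> R.
Proof.
rewrite F2_natr_odd [n%:R]F2_natr_odd => eq_odd.
rewrite -signr_odd -[(-1) ^+ n]signr_odd.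
by move: eq_odd; case: (odd m); case: (odd n).
Qed.

Lemma F2_natr_dotn (k : nat) (u v : 'rV['F_2]_k) : (dotn u v)%:R = (u *m v^T) 0 0.
Proof.
rewrite /dotn natr_sum mxE; apply: eq_bigr => i _.
by rewrite natrM !natr_Zp mxE.
Qed.

Lemma prod_signr_dotn (R : pzRingType) (I : finType) (k : nat)
    (f : I -> 'rV['F_2]_k) (v : 'rV['F_2]_k) :
  \prod_i (-1) ^+ dotn (f i) v = (-1) ^+ dotn (\sum_i f i) v :> R.
Proof.
rewrite prodrXr; apply: signr_F2_natr.
rewrite natr_sum F2_natr_dotn mulmx_suml summxE.
by apply: eq_bigr => i _; rewrite F2_natr_dotn.
Qed.

Lemma sum_signr_dotn (R : numDomainType) (k : nat) (s : 'rV['F_2]_k) :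
  \sum_(v : 'rV['F_2]_k) (-1) ^+ dotn s v = (if s == 0 then (2 ^ k)%:R else 0) :> R.
Proof.
have [-> | nz_s] := eqVneq s 0.
  rewrite (eq_bigr (fun=> 1)) => [|v _]; last first.
    by rewrite /dotn big1 // => i _; rewrite mxE.
  by rewrite sumr_const card_mx card_Fp // mul1n.
have [j nz_sj] : exists j, s 0 j != 0.
  apply/existsP; move: nz_s; apply: contraNT => /existsPn s0.
  by apply/eqP/rowP => j; rewrite mxE; apply/eqP/negbNE/s0.
(* translating v by the j-th unit vector flips every sign *)
pose e : 'rV['F_2]_k := delta_mx 0 j.
have flip v : (-1) ^+ dotn s (v + e) = - (-1) ^+ dotn s v :> R.
  rewrite -[RHS]mulN1r -exprS; apply: signr_F2_natr.
  rewrite -[(dotn s v).+1]addn1 natrD !F2_natr_dotn linearD /= mulmxDr mxE.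
  by rewrite trmx_delta -colE [col _ _ _ _]mxE [s 0 j]F2_neq0E nz_sj.
set S := \sum_v _; have S_opp : S = - S.
  by rewrite {1}/S (reindex_inj (addIr e)) -sumrN; apply: eq_bigr => v _; exact: flip.
have : S *+ 2 = 0 by rewrite mulr2n {1}S_opp addNr.
by move/eqP; rewrite mulrn_eq0 => /eqP.
Qed.

Section SystematicEncoder.
Variables (R : pzSemiRingType) (k n : nat) (G : 'M[R]_(k, n)) (le_kn : (k <= n)%N).
Hypothesis G_id : forall i j : 'I_k, G i (widen_ord le_kn j) = (i == j)%:R.

Definition info_part (c : 'rV[R]_n) : 'rV[R]_k := \row_j c 0 (widen_ord le_kn j).

Lemma encodeK : cancel (fun u : 'rV[R]_k => u *m G) info_part.
Proof.
move=> u; apply/rowP => j; rewrite !mxE (bigD1 j) //= G_id eqxx mulr1.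
by rewrite big1 ?addr0 // => i ne_ij; rewrite G_id (negbTE ne_ij) mulr0.
Qed.

Lemma encode_inj : injective (fun u : 'rV[R]_k => u *m G).
Proof. exact: can_inj encodeK. Qed.

End SystematicEncoder.

Lemma wH_sum (m n : nat) (A : 'M['F_2]_(m, n)) :
  wH A = (\sum_i \sum_j (A i j != 0%R : nat))%N.
Proof.
rewrite /wH pair_big /= -sum1_card big_mkcond /=.
by apply: eq_bigr => p _; rewrite inE; case: (A p.1 p.2 != 0).
Qed.

Lemma wH_rows (m n : nat) (A : 'M['F_2]_(m, n)) : wH A = (\sum_i wH (row i A))%N.
Proof.
rewrite wH_sum; apply: eq_bigr => i _.
by rewrite wH_sum big_ord1; apply: eq_bigr => j _; rewrite mxE.
Qed.

Lemma spc_codeE (nu : nat) (c : 'cV['F_2]_nu) : spc_code c = (\sum_i c i 0 == 0).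
Proof.
rewrite /spc_code wH_sum -F2_natr_eq0 natr_sum.
by congr (_ == 0); apply: eq_bigr => i _; rewrite big_ord1 -F2_neq0E.
Qed.

Lemma weight_enumE (m n : nat) (C : pred 'M['F_2]_(m, n)) :
  weight_enum C = \sum_(c | C c) 'X^(wH c).
Proof.
have wH_lt (c : 'M['F_2]_(m, n)) : (wH c < (m * n).+1)%N.
  by rewrite ltnS (leq_trans (max_card _)) // card_prod !card_ord.
rewrite (partition_big (fun c => Ordinal (wH_lt c)) xpredT) //=.
apply: eq_bigr => i _; rewrite (eq_bigr (fun=> 'X^i)) => [|c /andP[_ /eqP <-]] //.
rewrite sumr_const scaler_nat; congr (_ *+ _).
by apply: eq_card => c; rewrite inE [in RHS]unfold_in -val_eqE.
Qed.

Definition zero_sum_weight_enum (k n nu : nat) (G : 'M['F_2]_(k, n)) : {poly rat} :=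
  \sum_(f : {ffun 'I_nu -> 'rV['F_2]_k})
    (if \sum_i f i == 0 then 'X^(\sum_i wH (f i *m G)) else 0).

Section ProductCode.
Variables (k n nu : nat) (G : 'M['F_2]_(k, n)) (le_kn : (k <= n)%N).
Hypothesis G_id : forall i j : 'I_k, G i (widen_ord le_kn j) = (i == j)%:R.

Definition stack_codewords (f : {ffun 'I_nu -> 'rV['F_2]_k}) : 'M['F_2]_(nu, n) :=
  \matrix_i (f i *m G).

Definition unstack_codewords (c : 'M['F_2]_(nu, n)) : {ffun 'I_nu -> 'rV['F_2]_k} :=
  [ffun i => info_part le_kn (row i c)].

Lemma stack_codewordsK : cancel stack_codewords unstack_codewords.
Proof. by move=> f; apply/ffunP => i; rewrite ffunE rowK encodeK. Qed.

Lemma unstack_codewordsK (c : 'M['F_2]_(nu, n)) :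
  product_code G c -> stack_codewords (unstack_codewords c) = c.
Proof.
case/andP => /forallP row_code _; apply/row_matrixP => i.
have /existsP [u /eqP row_i] := row_code i.
by rewrite /stack_codewords rowK ffunE row_i encodeK.
Qed.

Lemma product_code_stack (f : {ffun 'I_nu -> 'rV['F_2]_k}) :
  product_code G (stack_codewords f) = (\sum_i f i == 0).
Proof.
have row_code i : lin_code G (row i (stack_codewords f)).
  by apply/existsP; exists (f i); rewrite rowK.
have col_sum j : \sum_i col j (stack_codewords f) i 0 = ((\sum_i f i) *m G) 0 j.
  by rewrite mulmx_suml summxE; apply: eq_bigr => i _; rewrite !mxE.
rewrite /product_code (introT forallP row_code) /=.
transitivity ((\sum_i f i) *m G == 0); last first.
  by rewrite -(inj_eq (encode_inj G_id)) mul0mx.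
apply/forallP/eqP => [col_code | code0 j]; last by rewrite spc_codeE col_sum code0 mxE.
by apply/rowP => j; have := col_code j; rewrite spc_codeE col_sum => /eqP ->; rewrite mxE.
Qed.

Lemma wH_stack (f : {ffun 'I_nu -> 'rV['F_2]_k}) :
  wH (stack_codewords f) = (\sum_i wH (f i *m G))%N.
Proof. by rewrite wH_rows; apply: eq_bigr => i _; rewrite rowK. Qed.

Lemma sum_product_code :
  \sum_(c : 'M['F_2]_(nu, n) | product_code G c) 'X^(wH c) = zero_sum_weight_enum nu G.
Proof.
rewrite (reindex_onto stack_codewords unstack_codewords unstack_codewordsK) /=.
rewrite big_mkcond; apply: eq_bigr => f _.
by rewrite product_code_stack stack_codewordsK eqxx andbT wH_stack.
Qed.

End ProductCode.

Lemma expr_sum_scaleXn (R : comNzRingType) (T : finType) (a : T -> R) (w : T -> nat)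
    (nu : nat) :
  (\sum_t a t *: 'X^(w t)) ^+ nu =
  \sum_(f : {ffun 'I_nu -> T}) (\prod_i a (f i)) *: 'X^(\sum_i w (f i)).
Proof.
rewrite -[nu in _ ^+ nu]card_ord -prodr_const (eq_bigl xpredT) // bigA_distr_bigA /=.
by apply: eq_bigr => f _; rewrite scaler_prod prodrXr.
Qed.

Lemma zero_sum_weight_enumE (k n nu : nat) (G : 'M['F_2]_(k, n)) :
  zero_sum_weight_enum nu G =
  (2%:R ^- k : rat) *:
    \sum_(v : 'rV['F_2]_k)
      (\sum_(u : 'rV['F_2]_k) (-1) ^+ dotn u v *: 'X^(wH (u *m G))) ^+ nu.
Proof.
rewrite /zero_sum_weight_enum.
under [in RHS]eq_bigr => v _ do rewrite expr_sum_scaleXn.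
rewrite exchange_big scaler_sumr; apply: eq_bigr => f _ /=.
rewrite -scaler_suml (eq_bigr _ (fun v _ => prod_signr_dotn _ f v)).
rewrite sum_signr_dotn; case: eqP => _; last by rewrite scale0r scaler0.
by rewrite scalerA natrX mulVf ?scale1r // expf_neq0.
Qed.

Theorem theorem3 (k1 n1 nu : nat) (G : 'M['F_2]_(k1, n1)) :
  systematic G ->
  weight_enum (product_code G : pred 'M['F_2]_(nu, n1)) =
  (2%:R ^- k1 : rat) *:
    \sum_(v : 'rV['F_2]_k1)
      (\sum_(u : 'rV['F_2]_k1) (-1) ^+ (dotn u v) *: 'X^(wH (u *m G))) ^+ nu.
Proof.
move=> [le_kn G_id].
by rewrite weight_enumE (sum_product_code nu G_id) zero_sum_weight_enumE.
Qed.
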